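(* Let $a,b,c\ge 0$ and let $q:\mathbb R^M\to\mathbb R_+$ be a positive semidefinite quadratic form. Then the function $x\mapsto (a+b\,q(x))e^{-c\,q(x)}$ is log-concave on $\mathbb R^M$ whenever $ca\ge b$.
   Context: A function $f:\mathbb R^M\to\mathbb R_{\ge 0}$ is log-concave if $\log f$ is concave (with $\log 0=-\infty$). *)

From HB Require Import structures.
From mathcomp Require Import all_boot all_order all_algebra.
From mathcomp Require Import all_classical all_reals all_analysis.
Set Implicit Arguments. Unset Strict Implicit. Unset Printing Implicit Defensive.
Import Order.TTheory GRing.Theory Num.Theory.
Local Open Scope ring_scope.

Definition qform (R : realType) (M : nat) (A : 'M[R]_M) (x : 'rV[R]_M) : R :=
  (x *m A *m x^T) 0 0.

Definition psd_qform (R : realType) (M : nat) (A : 'M[R]_M) : Prop :=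
  forall x : 'rV[R]_M, 0 <= qform A x.

Definition elog (R : realType) (r : R) : \bar R :=
  if 0 < r then (ln r)%:E else -oo%E.

Definition log_concave (R : realType) (M : nat) (f : 'rV[R]_M -> R) : Prop :=
  (forall x, 0 <= f x) /\
  forall (x y : 'rV[R]_M) (t : R), 0 < t -> t < 1 ->
    (((1 - t)%:E * elog (f x)) + (t%:E * elog (f y)) <=
       elog (f ((1 - t) *: x + t *: y)%R))%E.

From HB Require Import structures.
From mathcomp Require Import all_boot all_order all_algebra.
From mathcomp Require Import all_classical all_reals all_analysis.
From mathcomp Require Import ring lra.
Import Order.TTheory GRing.Theory Num.Theory.
Local Open Scope ring_scope.

(* For a > 0 the logarithm of the function is phi (q x), where
   phi s = ln (a + b s) - c s is concave and, since
   phi' s = b / (a + b s) - c <= b / a - c <= 0, nonincreasing on [0, +oo).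
   A positive semidefinite form is convex, and a concave nonincreasing function
   of a convex function is concave.  If a = 0 then b <= c a forces b = 0, and
   the function vanishes identically. *)

Section bilinear_form.
Variables (R : realType) (M : nat) (A : 'M[R]_M).

Definition bform (u v : 'rV[R]_M) : R := (u *m A *m v^T) 0 0.

Lemma bformDl u1 u2 v : bform (u1 + u2) v = bform u1 v + bform u2 v.
Proof. by rewrite /bform !mulmxDl mxE. Qed.

Lemma bformDr u v1 v2 : bform u (v1 + v2) = bform u v1 + bform u v2.
Proof. by rewrite /bform raddfD /= mulmxDr mxE. Qed.

Lemma bformZl k u v : bform (k *: u) v = k * bform u v.
Proof. by rewrite /bform -!scalemxAl mxE. Qed.

Lemma bformZr k u v : bform u (k *: v) = k * bform u v.
Proof. by rewrite /bform linearZ /= -scalemxAr mxE. Qed.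

Lemma qform_convex_comb (x y : 'rV[R]_M) t :
  qform A ((1 - t) *: x + t *: y) =
  (1 - t) * qform A x + t * qform A y - t * (1 - t) * qform A (x - y).
Proof.
have -> : x - y = x + (-1) *: y by rewrite scaleN1r.
rewrite /qform -!/(bform _ _).
by rewrite !(bformDl, bformDr, bformZl, bformZr); ring.
Qed.

Lemma psd_qform_convex (x y : 'rV[R]_M) t : psd_qform A -> 0 <= t -> t <= 1 ->
  qform A ((1 - t) *: x + t *: y) <= (1 - t) * qform A x + t * qform A y.
Proof.
move=> psdA t0 t1; rewrite qform_convex_comb lerBlDr lerDl.
by rewrite !mulr_ge0 ?subr_ge0.
Qed.

End bilinear_form.

Section log_profile.
Variable R : realType.
Implicit Types a b c s r t u v : R.

Lemma concave_ln_comb u v t : 0 < u -> 0 < v -> 0 <= t -> t <= 1 ->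
  (1 - t) * ln u + t * ln v <= ln ((1 - t) * u + t * v).
Proof.
move=> u0 v0 t0 t1; have := concave_ln (Itv01 t0 t1) v0 u0.
by rewrite !convRE /= addrC [X in _ <= ln X]addrC.
Qed.

Lemma elog_mulexpR u v : 0 < u -> elog (u * expR v) = (ln u + v)%:E.
Proof. by move=> u0; rewrite /elog mulr_gt0 ?expR_gt0 // lnM ?posrE ?expR_gt0 // expRK. Qed.

Definition log_profile a b c s : R := ln (a + b * s) - c * s.

Lemma log_profile_concave a b c s r t : 0 < a -> 0 <= b -> 0 <= s -> 0 <= r ->
  0 <= t -> t <= 1 ->
  (1 - t) * log_profile a b c s + t * log_profile a b c r <=
  log_profile a b c ((1 - t) * s + t * r).
Proof.
move=> a0 b0 s0 r0 t0 t1.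
have pos_affine w : 0 <= w -> 0 < a + b * w by move=> w0; rewrite ltr_pwDl ?mulr_ge0.
have := @concave_ln_comb _ _ _ (pos_affine _ s0) (pos_affine _ r0) t0 t1.
have -> : (1 - t) * (a + b * s) + t * (a + b * r) = a + b * ((1 - t) * s + t * r).
  by ring.
rewrite /log_profile; lra.
Qed.

Lemma log_profile_nonincreasing a b c p m : 0 < a -> 0 <= b -> b <= c * a ->
  0 <= p -> p <= m -> log_profile a b c m <= log_profile a b c p.
Proof.
move=> a0 b0 bca p0 pm; set d := a + b * p.
have d0 : 0 < d by rewrite ltr_pwDl ?mulr_ge0.
have dm : a + b * m = d * (1 + b * (m - p) / d).
  by rewrite /d; field; rewrite lt0r_neq0.
have incr0 : 0 <= b * (m - p) / d by rewrite divr_ge0 ?mulr_ge0 ?subr_ge0 // ltW.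
have ln_incr : ln (1 + b * (m - p) / d) <= b * (m - p) / d.
  by rewrite le_ln1Dx // (lt_le_trans _ incr0) // ltrN10.
have incr_a : b * (m - p) / d <= b * (m - p) / a.
  by rewrite ler_wpM2l ?mulr_ge0 ?subr_ge0 // lef_pV2 ?posrE // lerDl mulr_ge0.
have incr_c : b * (m - p) / a <= c * (m - p).
  by rewrite ler_pdivrMr // mulrAC ler_wpM2r ?subr_ge0.
rewrite /log_profile dm lnM ?posrE // ?ltr_wpDr //; lra.
Qed.

End log_profile.

Theorem lemma1 (R : realType) (M : nat) (A : 'M[R]_M) (a b c : R)
  (ha : 0 <= a) (hb : 0 <= b) (hc : 0 <= c) (hA : psd_qform A)
  (hcab : b <= c * a) :
  log_concave (fun x : 'rV[R]_M => (a + b * qform A x) * expR (- (c * qform A x))).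
Proof.
split=> [x|x y t t0 t1]; first by rewrite mulr_ge0 ?expR_ge0 ?addr_ge0 ?mulr_ge0.
have [a0|a_neq0] := eqVneq a 0.
  have b0 : b = 0 by apply/le_anti; rewrite hb -(mulr0 c) -a0 hcab.
  rewrite a0 b0 /elog !(mul0r, add0r) ltxx.
  by rewrite !(muleC _ -oo%E) !gt0_mulNye ?lte_fin ?subr_gt0.
have a_gt0 : 0 < a by rewrite lt0r a_neq0.
have pos_affine w : 0 <= w -> 0 < a + b * w by move=> w0; rewrite ltr_pwDl ?mulr_ge0.
rewrite !elog_mulexpR ?pos_affine // -!EFinM -EFinD lee_fin.
apply: le_trans
  (@log_profile_concave R a b c _ _ t a_gt0 hb (hA x) (hA y) (ltW t0) (ltW t1)) _.
apply: log_profile_nonincreasing => //.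
exact: psd_qform_convex (ltW t0) (ltW t1).
Qed.
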